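(* Let $\omega_N=\{x_1,\dots,x_N\}\subset\mathbb{S}^2\setminus\{(0,0,1)\}$ be pairwise distinct points, $z_i=\pi_{\mathbb{S}^2}(x_i)$, and $p_N(x)=\prod_{i=1}^N(x-z_i)$. Then $$\mathcal{E}_{\log}(\omega_N)=\sum_{i=1}^N\log\mu_{\rm norm}(p_N,z_i)+N\log\Big(\frac{\prod_{i=1}^N\sqrt{1+|z_i|^2}}{\|p_N\|}\Big)-N^2\log 2-\frac{N\log N}{2}+N\log 2.$$
   Context: $\mathbb{S}^2$ is the unit sphere in $\mathbb{R}^3$; $\pi_{\mathbb{S}^2}(a,b,c)=\frac{a+ib}{1-c}$. $\mathcal{E}_{\log}(\{x_1,\dots,x_N\})=-\sum_{i\ne j}\log\|x_i-x_j\|$. $\|\sum_{i=0}^N a_iz^i\|=(\sum_i\binom{N}{i}^{-1}|a_i|^2)^{1/2}$ is the Bombieri–Weyl norm, and for a root $z$ of degree-$N$ polynomial $P$, $\mu_{\rm norm}(P,z)=N^{1/2}\|P\|(1+|z|^2)^{N/2-1}/|P'(z)|$. *)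

From Stdlib Require Import Reals List.
Import ListNotations.
Open Scope R_scope.

Definition Cx : Type := (R * R)%type.
Definition C0 : Cx := (0, 0).
Definition C1 : Cx := (1, 0).
Definition Cadd (u v : Cx) : Cx := (fst u + fst v, snd u + snd v).
Definition Copp (u : Cx) : Cx := (- fst u, - snd u).
Definition Cmul (u v : Cx) : Cx :=
  (fst u * fst v - snd u * snd v, fst u * snd v + snd u * fst v).
Definition Crscale (r : R) (u : Cx) : Cx := (r * fst u, r * snd u).
Definition Cnorm2 (u : Cx) : R := fst u ^ 2 + snd u ^ 2.
Definition Cabs (u : Cx) : R := sqrt (Cnorm2 u).

Definition R3 : Type := (R * R * R)%type.
Definition on_sphere (p : R3) : Prop :=
  let '(a, b, c) := p in a ^ 2 + b ^ 2 + c ^ 2 = 1.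
Definition north_pole : R3 := (0, 0, 1).
Definition dist3 (p q : R3) : R :=
  let '(a, b, c) := p in let '(a', b', c') := q in
  sqrt ((a - a') ^ 2 + (b - b') ^ 2 + (c - c') ^ 2).

Definition stereo (p : R3) : Cx :=
  let '(a, b, c) := p in (a / (1 - c), b / (1 - c)).

Fixpoint rsum (n : nat) (f : nat -> R) : R :=
  match n with O => 0 | S m => rsum m f + f m end.
Fixpoint rprod (n : nat) (f : nat -> R) : R :=
  match n with O => 1 | S m => rprod m f * f m end.

Definition Elog (N : nat) (x : nat -> R3) : R :=
  - rsum N (fun i => rsum N (fun j =>
      if Nat.eqb i j then 0 else ln (dist3 (x i) (x j)))).

(** Polynomials with complex coefficients, as coefficient lists in
    ascending order: [a0; a1; ...] represents sum a_i X^i. *)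
Definition poly := list Cx.
Fixpoint Padd (p q : poly) : poly :=
  match p, q with
  | [], _ => q
  | _, [] => p
  | a :: p', b :: q' => Cadd a b :: Padd p' q'
  end.
Definition Pscale (c : Cx) (p : poly) : poly := map (Cmul c) p.
Definition PmulX (p : poly) : poly := C0 :: p.
Definition Pmul_lin (z : Cx) (p : poly) : poly := Padd (PmulX p) (Pscale (Copp z) p).
Definition Peval (p : poly) (x : Cx) : Cx :=
  fold_right (fun a acc => Cadd a (Cmul x acc)) C0 p.
Fixpoint Pderiv_aux (k : nat) (p : poly) : poly :=
  match p with [] => [] | a :: q => Crscale (INR k) a :: Pderiv_aux (S k) q end.
Definition Pderiv (p : poly) : poly := Pderiv_aux 1 (tl p).
Definition coef (p : poly) (i : nat) : Cx := nth i p C0.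

Fixpoint poly_of_roots (z : nat -> Cx) (N : nat) : poly :=
  match N with O => [C1] | S n => Pmul_lin (z n) (poly_of_roots z n) end.

Definition bw_norm (N : nat) (p : poly) : R :=
  sqrt (rsum (S N) (fun i => Cnorm2 (coef p i) / Binomial.C N i)).

Definition mu_norm (N : nat) (p : poly) (z : Cx) : R :=
  sqrt (INR N) * bw_norm N p * Rpower (1 + Cnorm2 z) (INR N / 2 - 1)
  / Cabs (Peval (Pderiv p) z).

(* Under stereographic projection the chordal distance on the sphere reads
   |x_i - x_j| = 2 |z_i - z_j| / sqrt ((1 + |z_i|^2) (1 + |z_j|^2)), and for the
   monic polynomial p_N = prod_j (X - z_j) one has |p_N'(z_i)| = prod_(j <> i) |z_i - z_j|.
   After taking logarithms both sides of the identity are the same combination of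
   sum_i ln (1 + |z_i|^2), sum_(i <> j) ln |z_i - z_j| and ln 2: the Bombieri-Weyl
   norm cancels and only has to be nonzero, which holds because p_N is monic. *)

From Pilot Require Import Defs.
From Stdlib Require Import Reals List Lra Lia Psatz.
Open Scope R_scope.

Lemma rsum_ext n f g : (forall j, (j < n)%nat -> f j = g j) -> rsum n f = rsum n g.
Proof.
  induction n as [|n IH]; intros Hfg; cbn [rsum]; [reflexivity|].
  rewrite IH, Hfg; auto with arith.
Qed.

Lemma rprod_ext n f g : (forall j, (j < n)%nat -> f j = g j) -> rprod n f = rprod n g.
Proof.
  induction n as [|n IH]; intros Hfg; cbn [rprod]; [reflexivity|].
  rewrite IH, Hfg; auto with arith.
Qed.

Lemma rsum_lin n a b c f g :
  rsum n (fun i => a + b * f i + c * g i) = INR n * a + b * rsum n f + c * rsum n g.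
Proof. induction n as [|n IH]; cbn [rsum]; [simpl; ring|]. rewrite IH, S_INR; ring. Qed.

Lemma rsum_scal n c f : rsum n (fun i => c * f i) = c * rsum n f.
Proof. induction n as [|n IH]; cbn [rsum]; [ring|]. rewrite IH; ring. Qed.

Lemma rsum_skip_lin n i a b c f g : (i < n)%nat ->
  rsum n (fun j => if Nat.eqb i j then 0 else a + b * f j + c * g j) =
  (INR n - 1) * a + b * (rsum n f - f i)
  + c * rsum n (fun j => if Nat.eqb i j then 0 else g j).
Proof.
  induction n as [|n IH]; intros Hi; [lia|]. cbn [rsum]. rewrite S_INR.
  destruct (Nat.eq_dec i n) as [->|Hne].
  - rewrite Nat.eqb_refl.
    assert (Hoff : forall h, rsum n (fun j => if Nat.eqb n j then 0 else h j) = rsum n h).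
    { intros h. apply rsum_ext. intros j Hj. destruct (Nat.eqb_spec n j); [lia|reflexivity]. }
    rewrite !Hoff, rsum_lin. ring.
  - rewrite IH by lia. destruct (Nat.eqb_spec i n); [lia|]. ring.
Qed.

Lemma rprod_pos n f : (forall j, (j < n)%nat -> 0 < f j) -> 0 < rprod n f.
Proof.
  induction n as [|n IH]; intros Hf; cbn [rprod]; [lra|].
  apply Rmult_lt_0_compat; [apply IH; intros; apply Hf|apply Hf]; lia.
Qed.

Lemma rsum_nonneg n f : (forall j, (j < n)%nat -> 0 <= f j) -> 0 <= rsum n f.
Proof.
  induction n as [|n IH]; intros Hf; cbn [rsum]; [lra|].
  apply Rplus_le_le_0_compat; [apply IH; intros; apply Hf|apply Hf]; lia.
Qed.

Lemma ln_rprod n f : (forall j, (j < n)%nat -> 0 < f j) ->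
  ln (rprod n f) = rsum n (fun j => ln (f j)).
Proof.
  induction n as [|n IH]; intros Hf; cbn [rprod rsum]; [apply ln_1|].
  rewrite ln_mult, IH; [reflexivity| |apply rprod_pos|];
    intros; apply Hf; lia.
Qed.

Lemma ln_sqrt y : 0 < y -> ln (sqrt y) = ln y / 2.
Proof. intros Hy. rewrite <- Rpower_sqrt, ln_Rpower by exact Hy. field. Qed.

Lemma ln_div a b : 0 < a -> 0 < b -> ln (a / b) = ln a - ln b.
Proof. intros Ha Hb. unfold Rdiv. rewrite ln_mult, ln_Rinv; auto with real. Qed.

Ltac Cring :=
  apply injective_projections;
  unfold Cadd, Copp, Cmul, Crscale, C0, Defs.C1; cbn [fst snd]; ring.

Lemma Cnorm2_mul u v : Cnorm2 (Cmul u v) = Cnorm2 u * Cnorm2 v.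
Proof. unfold Cnorm2, Cmul; cbn [fst snd]; ring. Qed.

Lemma Cnorm2_ge0 u : 0 <= Cnorm2 u.
Proof. unfold Cnorm2. nra. Qed.

Lemma one_add_Cnorm2_pos u : 0 < 1 + Cnorm2 u.
Proof. pose proof (Cnorm2_ge0 u). lra. Qed.

Lemma Cnorm2_pos u : u <> C0 -> 0 < Cnorm2 u.
Proof.
  destruct u as [a b]; unfold Cnorm2, C0; cbn [fst snd]; intros Hu.
  destruct (Req_dec a 0) as [->|Ha]; [destruct (Req_dec b 0) as [->|Hb]|].
  - contradiction.
  - nra.
  - nra.
Qed.

Lemma Peval_Padd p q x : Peval (Padd p q) x = Cadd (Peval p x) (Peval q x).
Proof.
  revert q; induction p as [|a p IH]; intros [|b q]; simpl; try Cring.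
  rewrite IH. Cring.
Qed.

Lemma Peval_Pscale c p x : Peval (Pscale c p) x = Cmul c (Peval p x).
Proof. induction p as [|a p IH]; simpl; [|rewrite IH]; Cring. Qed.

Lemma Peval_Pmul_lin w p x :
  Peval (Pmul_lin w p) x = Cmul (Cadd x (Copp w)) (Peval p x).
Proof. unfold Pmul_lin. rewrite Peval_Padd, Peval_Pscale. simpl. Cring. Qed.

Lemma Peval_Pderiv_aux_Padd k p q x :
  Peval (Pderiv_aux k (Padd p q)) x =
  Cadd (Peval (Pderiv_aux k p) x) (Peval (Pderiv_aux k q) x).
Proof.
  revert q k; induction p as [|a p IH]; intros [|b q] k; simpl; try Cring.
  rewrite IH. Cring.
Qed.

Lemma Peval_Pderiv_aux_Pscale k c p x :
  Peval (Pderiv_aux k (Pscale c p)) x = Cmul c (Peval (Pderiv_aux k p) x).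
Proof. revert k; induction p as [|a p IH]; intros k; simpl; [|rewrite IH]; Cring. Qed.

Lemma Peval_Pderiv_aux_S k p x :
  Peval (Pderiv_aux (S k) p) x = Cadd (Peval (Pderiv_aux k p) x) (Peval p x).
Proof.
  revert k; induction p as [|a p IH]; intros k; simpl; [Cring|].
  rewrite IH. change (match k with 0%nat => 1 | S _ => INR k + 1 end) with (INR (S k)).
  rewrite S_INR. Cring.
Qed.

Lemma Peval_Pderiv_aux_0 p x :
  Peval (Pderiv_aux 0 p) x = Cmul x (Peval (Pderiv p) x).
Proof. destruct p as [|a p]; unfold Pderiv; simpl; Cring. Qed.

Lemma Peval_Pderiv_Pmul_lin w p x :
  Peval (Pderiv (Pmul_lin w p)) x =
  Cadd (Peval p x) (Cmul (Cadd x (Copp w)) (Peval (Pderiv p) x)).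
Proof.
  destruct p as [|a q]; [simpl; Cring|].
  change (Peval (Pderiv_aux 1 (Padd (a :: q) (Pscale (Copp w) q))) x =
          Cadd (Peval (a :: q) x) (Cmul (Cadd x (Copp w)) (Peval (Pderiv (a :: q)) x))).
  rewrite Peval_Pderiv_aux_Padd, Peval_Pderiv_aux_Pscale, Peval_Pderiv_aux_S,
    Peval_Pderiv_aux_0.
  unfold Pderiv; simpl; Cring.
Qed.

Lemma coef_Padd p q k : coef (Padd p q) k = Cadd (coef p k) (coef q k).
Proof.
  unfold coef. revert q k; induction p as [|a p IH]; intros [|b q] [|k]; simpl;
    try Cring.
  apply IH.
Qed.

Lemma coef_Pscale c p k : coef (Pscale c p) k = Cmul c (coef p k).
Proof.
  unfold coef. revert k; induction p as [|a p IH]; intros [|k]; simpl; try Cring.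
  apply IH.
Qed.

Lemma coef_Pmul_lin w p k :
  coef (Pmul_lin w p) (S k) = Cadd (coef p k) (Cmul (Copp w) (coef p (S k))).
Proof. unfold Pmul_lin. rewrite coef_Padd, coef_Pscale. reflexivity. Qed.

Section PolyOfRoots.
Variable z : nat -> Cx.

Lemma Cnorm2_Peval_poly_of_roots n x :
  Cnorm2 (Peval (poly_of_roots z n) x) =
  rprod n (fun j => Cnorm2 (Cadd x (Copp (z j)))).
Proof.
  induction n as [|n IH]; cbn [poly_of_roots rprod].
  - unfold Cnorm2; simpl. ring.
  - rewrite Peval_Pmul_lin, Cnorm2_mul, IH. ring.
Qed.

Lemma Peval_poly_of_roots_root n i : (i < n)%nat -> Peval (poly_of_roots z n) (z i) = C0.
Proof.
  induction n as [|n IH]; intros Hi; [lia|]. cbn [poly_of_roots].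
  rewrite Peval_Pmul_lin.
  destruct (Nat.eq_dec i n) as [->|Hne]; [|rewrite IH by lia]; Cring.
Qed.

Lemma Cnorm2_Pderiv_poly_of_roots_root n i : (i < n)%nat ->
  Cnorm2 (Peval (Pderiv (poly_of_roots z n)) (z i)) =
  rprod n (fun j => if Nat.eqb i j then 1 else Cnorm2 (Cadd (z i) (Copp (z j)))).
Proof.
  induction n as [|n IH]; intros Hi; [lia|]. cbn [poly_of_roots rprod].
  rewrite Peval_Pderiv_Pmul_lin.
  destruct (Nat.eq_dec i n) as [->|Hne].
  - rewrite Nat.eqb_refl, Rmult_1_r.
    replace (Cadd _ _) with (Peval (poly_of_roots z n) (z n)) by Cring.
    rewrite Cnorm2_Peval_poly_of_roots. apply rprod_ext.
    intros j Hj. destruct (Nat.eqb_spec n j); [lia|reflexivity].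
  - rewrite Peval_poly_of_roots_root by lia.
    destruct (Nat.eqb_spec i n); [lia|].
    replace (Cadd C0 _) with
      (Cmul (Cadd (z i) (Copp (z n))) (Peval (Pderiv (poly_of_roots z n)) (z i)))
      by Cring.
    rewrite Cnorm2_mul, IH by lia. ring.
Qed.

Lemma coef_poly_of_roots_high n k : (n < k)%nat -> coef (poly_of_roots z n) k = C0.
Proof.
  revert k; induction n as [|n IH]; intros [|k] Hk; try lia.
  - destruct k; reflexivity.
  - cbn [poly_of_roots]. rewrite coef_Pmul_lin, !IH by lia. Cring.
Qed.

Lemma coef_poly_of_roots_lead n : coef (poly_of_roots z n) n = Defs.C1.
Proof.
  induction n as [|n IH]; [reflexivity|]. cbn [poly_of_roots].
  rewrite coef_Pmul_lin, IH, coef_poly_of_roots_high by lia. Cring.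
Qed.

End PolyOfRoots.

Lemma binomial_pos n i : 0 < Binomial.C n i.
Proof.
  unfold Binomial.C.
  apply Rdiv_lt_0_compat; [|apply Rmult_lt_0_compat]; apply INR_fact_lt_0.
Qed.

Lemma bw_norm_pos N p : coef p N <> C0 -> 0 < bw_norm N p.
Proof.
  intros Hlead. unfold bw_norm. apply sqrt_lt_R0. cbn [rsum].
  apply Rplus_le_lt_0_compat.
  - apply rsum_nonneg. intros j _.
    apply Rmult_le_pos; [apply Cnorm2_ge0|left; apply Rinv_0_lt_compat, binomial_pos].
  - apply Rdiv_lt_0_compat; [apply Cnorm2_pos, Hlead|apply binomial_pos].
Qed.

Lemma bw_norm_poly_of_roots_pos z n : 0 < bw_norm n (poly_of_roots z n).
Proof.
  apply bw_norm_pos. rewrite coef_poly_of_roots_lead.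
  unfold Defs.C1, C0. intros Heq. injection Heq. lra.
Qed.

Lemma one_sub_height_pos a b c :
  on_sphere (a, b, c) -> (a, b, c) <> north_pole -> 0 < 1 - c.
Proof.
  unfold on_sphere, north_pole. intros Hs Hn.
  destruct (Rlt_dec c 1) as [Hc|Hc]; [lra|].
  exfalso. apply Hn.
  assert (c = 1) by nra. assert (a = 0) by nra. assert (b = 0) by nra.
  subst; reflexivity.
Qed.

Lemma one_add_Cnorm2_stereo a b c :
  on_sphere (a, b, c) -> (a, b, c) <> north_pole ->
  1 + Cnorm2 (stereo (a, b, c)) = 2 / (1 - c).
Proof.
  intros Hs Hn. pose proof (one_sub_height_pos a b c Hs Hn).
  unfold on_sphere in Hs. unfold Cnorm2, stereo; cbn [fst snd].
  field_simplify_eq; nra.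
Qed.

Lemma dist3_stereo p q :
  on_sphere p -> on_sphere q -> p <> north_pole -> q <> north_pole ->
  dist3 p q = sqrt (4 * Cnorm2 (Cadd (stereo p) (Copp (stereo q))) /
                    ((1 + Cnorm2 (stereo p)) * (1 + Cnorm2 (stereo q)))).
Proof.
  destruct p as [[a b] c], q as [[a' b'] c']. intros Hp Hq Np Nq.
  rewrite !one_add_Cnorm2_stereo by assumption.
  pose proof (one_sub_height_pos _ _ _ Hp Np).
  pose proof (one_sub_height_pos _ _ _ Hq Nq).
  unfold on_sphere in Hp, Hq. unfold dist3, stereo, Cnorm2, Cadd, Copp; cbn [fst snd].
  f_equal. field_simplify_eq; [|split; lra].
  replace (a ^ 2) with (1 - b ^ 2 - c ^ 2) by lra.
  replace (a' ^ 2) with (1 - b' ^ 2 - c' ^ 2) by lra.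
  ring.
Qed.

Lemma dist3_eq0 p q : dist3 p q = 0 -> p = q.
Proof.
  destruct p as [[a b] c], q as [[a' b'] c']. unfold dist3. intros H0.
  pose proof (pow2_ge_0 (a - a')). pose proof (pow2_ge_0 (b - b')).
  pose proof (pow2_ge_0 (c - c')).
  apply sqrt_eq_0 in H0; [|lra].
  assert (Ea : a - a' = 0) by (apply Rsqr_0_uniq; rewrite Rsqr_pow2; lra).
  assert (Eb : b - b' = 0) by (apply Rsqr_0_uniq; rewrite Rsqr_pow2; lra).
  assert (Ec : c - c' = 0) by (apply Rsqr_0_uniq; rewrite Rsqr_pow2; lra).
  f_equal; [f_equal|]; lra.
Qed.

Lemma Cnorm2_stereo_sub_pos p q :
  on_sphere p -> on_sphere q -> p <> north_pole -> q <> north_pole -> p <> q ->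
  0 < Cnorm2 (Cadd (stereo p) (Copp (stereo q))).
Proof.
  intros Hp Hq Np Nq Hpq.
  destruct (Cnorm2_ge0 (Cadd (stereo p) (Copp (stereo q)))) as [Hpos|H0]; [exact Hpos|].
  exfalso. apply Hpq, dist3_eq0.
  rewrite dist3_stereo, <- H0 by assumption.
  unfold Rdiv. rewrite Rmult_0_r, Rmult_0_l. apply sqrt_0.
Qed.

Lemma ln_dist3_stereo p q :
  on_sphere p -> on_sphere q -> p <> north_pole -> q <> north_pole -> p <> q ->
  ln (dist3 p q) =
  ln 2 + ln (Cnorm2 (Cadd (stereo p) (Copp (stereo q)))) / 2
  - ln (1 + Cnorm2 (stereo p)) / 2 - ln (1 + Cnorm2 (stereo q)) / 2.
Proof.
  intros Hp Hq Np Nq Hpq.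
  pose proof (Cnorm2_stereo_sub_pos p q Hp Hq Np Nq Hpq).
  pose proof (one_add_Cnorm2_pos (stereo p)). pose proof (one_add_Cnorm2_pos (stereo q)).
  rewrite dist3_stereo by assumption.
  rewrite ln_sqrt, ln_div, !ln_mult;
    repeat (apply Rmult_lt_0_compat || apply Rdiv_lt_0_compat
            || apply Rinv_0_lt_compat); try lra.
  replace 4 with (2 * 2) by ring. rewrite ln_mult by lra. field.
Qed.

Definition log_gap_sum (z : nat -> Cx) (N i : nat) : R :=
  rsum N (fun j => if Nat.eqb i j then 0 else ln (Cnorm2 (Cadd (z i) (Copp (z j))))).

Section RootSums.
Variables (z : nat -> Cx) (N : nat).
Hypothesis Hgap : forall i j, (i < N)%nat -> (j < N)%nat -> i <> j ->
  0 < Cnorm2 (Cadd (z i) (Copp (z j))).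

Lemma ln_mu_norm_poly_of_roots i : (i < N)%nat ->
  ln (mu_norm N (poly_of_roots z N) (z i)) =
  ln (INR N) / 2 + ln (bw_norm N (poly_of_roots z N))
  + (INR N / 2 - 1) * ln (1 + Cnorm2 (z i)) - log_gap_sum z N i / 2.
Proof.
  intros Hi.
  assert (HN : 0 < INR N) by (apply lt_0_INR; lia).
  pose proof (bw_norm_poly_of_roots_pos z N).
  pose proof (one_add_Cnorm2_pos (z i)).
  assert (Hfactor : forall j, (j < N)%nat ->
    0 < (if Nat.eqb i j then 1 else Cnorm2 (Cadd (z i) (Copp (z j))))).
  { intros j Hj. destruct (Nat.eqb_spec i j); [lra|auto]. }
  unfold mu_norm, Cabs. rewrite Cnorm2_Pderiv_poly_of_roots_root by exact Hi.
  pose proof (rprod_pos _ _ Hfactor).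
  rewrite ln_div, !ln_mult, !ln_sqrt, ln_Rpower, ln_rprod;
    unfold Rpower; repeat first [ assumption | apply Rmult_lt_0_compat
                                | apply sqrt_lt_R0 | apply exp_pos ].
  rewrite (rsum_ext _ _ (fun j =>
    if Nat.eqb i j then 0 else ln (Cnorm2 (Cadd (z i) (Copp (z j)))))).
  - unfold log_gap_sum. field.
  - intros j _. destruct (Nat.eqb i j); [apply ln_1|reflexivity].
Qed.

Lemma rsum_ln_mu_norm_poly_of_roots :
  rsum N (fun i => ln (mu_norm N (poly_of_roots z N) (z i))) =
  INR N * (ln (INR N) / 2 + ln (bw_norm N (poly_of_roots z N)))
  + (INR N / 2 - 1) * rsum N (fun i => ln (1 + Cnorm2 (z i)))
  - rsum N (log_gap_sum z N) / 2.
Proof.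
  rewrite (rsum_ext _ _ _ ln_mu_norm_poly_of_roots).
  rewrite (rsum_ext _ _ (fun i =>
    (ln (INR N) / 2 + ln (bw_norm N (poly_of_roots z N)))
    + (INR N / 2 - 1) * ln (1 + Cnorm2 (z i)) + (-1/2) * log_gap_sum z N i)).
  - rewrite rsum_lin. field.
  - intros i _. field.
Qed.

End RootSums.

Section SphereEnergy.
Variables (N : nat) (x : nat -> R3).
Hypothesis Hsph : forall i, (i < N)%nat -> on_sphere (x i).
Hypothesis Hnp : forall i, (i < N)%nat -> x i <> north_pole.
Hypothesis Hdist : forall i j, (i < N)%nat -> (j < N)%nat -> i <> j -> x i <> x j.

Let z := fun i => stereo (x i).

Lemma Cnorm2_stereo_gap_pos i j : (i < N)%nat -> (j < N)%nat -> i <> j ->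
  0 < Cnorm2 (Cadd (z i) (Copp (z j))).
Proof. intros Hi Hj Hij. apply Cnorm2_stereo_sub_pos; auto. Qed.

Lemma Elog_stereo :
  Elog N x =
  (INR N - 1) * rsum N (fun i => ln (1 + Cnorm2 (z i)))
  - rsum N (log_gap_sum z N) / 2 - INR N * (INR N - 1) * ln 2.
Proof.
  set (h := fun i => ln (1 + Cnorm2 (z i))).
  assert (Hrow : forall i, (i < N)%nat ->
    rsum N (fun j => if Nat.eqb i j then 0 else ln (dist3 (x i) (x j))) =
    (INR N - 1) * (ln 2 - h i / 2) + (-1/2) * (rsum N h - h i)
    + (1/2) * log_gap_sum z N i).
  { intros i Hi. rewrite (rsum_ext _ _ (fun j => if Nat.eqb i j then 0 else
      (ln 2 - h i / 2) + (-1/2) * h j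
      + (1/2) * ln (Cnorm2 (Cadd (z i) (Copp (z j)))))).
    - rewrite rsum_skip_lin by exact Hi. reflexivity.
    - intros j Hj. destruct (Nat.eqb_spec i j); [reflexivity|].
      rewrite ln_dist3_stereo by auto. unfold h, z. field. }
  unfold Elog. rewrite (rsum_ext _ _ _ Hrow).
  rewrite (rsum_ext _ _ (fun i =>
    (INR N - 1) * ln 2 - rsum N h / 2 + (1 - INR N / 2) * h i
    + (1/2) * log_gap_sum z N i)) by (intros; field).
  rewrite rsum_lin. field.
Qed.

End SphereEnergy.

Theorem lemma4p1 (N : nat) (x : nat -> R3)
  (Hsph : forall i, (i < N)%nat -> on_sphere (x i))
  (Hnp : forall i, (i < N)%nat -> x i <> north_pole)
  (Hdist : forall i j, (i < N)%nat -> (j < N)%nat -> i <> j -> x i <> x j) :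
  let z := fun i => stereo (x i) in
  let p := poly_of_roots z N in
  Elog N x =
    rsum N (fun i => ln (mu_norm N p (z i)))
    + INR N * ln (rprod N (fun i => sqrt (1 + Cnorm2 (z i))) / bw_norm N p)
    - INR N ^ 2 * ln 2
    - INR N * ln (INR N) / 2
    + INR N * ln 2.
Proof.
  intros z p.
  pose proof (bw_norm_poly_of_roots_pos z N).
  unfold p. rewrite (Elog_stereo N x Hsph Hnp Hdist),
    (rsum_ln_mu_norm_poly_of_roots z N (Cnorm2_stereo_gap_pos N x Hsph Hnp Hdist)).
  assert (Hsqrt : forall i, (i < N)%nat -> 0 < sqrt (1 + Cnorm2 (z i)))
    by (intros; apply sqrt_lt_R0, one_add_Cnorm2_pos).
  rewrite ln_div, ln_rprod by (assumption || apply rprod_pos, Hsqrt).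
  rewrite (rsum_ext _ (fun i => ln (sqrt (1 + Cnorm2 (z i))))
                      (fun i => (1/2) * ln (1 + Cnorm2 (z i))))
    by (intros; rewrite ln_sqrt by apply one_add_Cnorm2_pos; field).
  rewrite rsum_scal. unfold z. field.
Qed.
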